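(* Every valid non-entangling physical transformation of a system of $N$ elementary toy systems is a composition of local permutations (permutations of $\{1,2,3,4\}$ acting on a single elementary subsystem) and system swaps $S_{i,j}$, where $S_{i,j}(a_1,\dots,a_i,\dots,a_j,\dots,a_N) = (a_1,\dots,a_j,\dots,a_i,\dots,a_N)$.
   Context: In Spekkens' toy theory, ontic states of $N$ elementary systems are elements of $\{1,2,3,4\}^N$, and an epistemic state is a set of ontic states; only certain epistemic states are valid (those satisfying the knowledge balance principle globally and on all subsystems; equivalently, those equal to the set of ontic states fixed by some toy stabilizer group). A physical transformation is a map $T$ on ontic states, acting on epistemic states by $T(E)=\{T(o): o\in E\}$; it is valid if it maps valid epistemic states to valid epistemic states, and valid transformations are permutations of the ontic states. A product state with respect to a division of the systems into groups $A_1,\dots,A_k$ is a Cartesian product of valid epistemic states on the groups. A transformation is non-entangling if, for every division into groups $A_1,\dots,A_k$, it maps every product state with respect to that division to a product state with respect to the same division. *)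

(* Spekkens' toy theory, encoded in its symplectic
   (toy-stabilizer) form. *)
From mathcomp Require Import all_boot all_order all_fingroup.
Set Implicit Arguments. Unset Strict Implicit. Unset Printing Implicit Defensive.

(* Ontic states of a collection of elementary systems indexed by I:
   each elementary system is in one of 4 ontic states 'I_4 = {0,1,2,3}
   (standing for {1,2,3,4}). *)
Definition ontic (I : finType) := {ffun I -> 'I_4}.

(* Coordinates of an elementary ontic state x in Z2 x Z2:
   x = 2 q + p. *)
Definition qbit (x : 'I_4) : bool := 2 <= x.
Definition pbit (x : 'I_4) : bool := odd x.

(* Toy stabilizer operators (up to sign): for each system, a pair of bits
   (a_i, b_i), i.e. one of I, X, Y, Z. *)
Definition tobs (I : finType) := ({ffun I -> bool} * {ffun I -> bool})%type.

Definition tzero (I : finType) : tobs I := ([ffun=> false], [ffun=> false]).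

(* product of toy operators (up to sign) *)
Definition tadd (I : finType) (f g : tobs I) : tobs I :=
  ([ffun i => f.1 i (+) g.1 i], [ffun i => f.2 i (+) g.2 i]).

(* value (as a bit; false = +1, true = -1) of the operator f on ontic state o *)
Definition teval (I : finType) (f : tobs I) (o : ontic I) : bool :=
  \big[addb/false]_(i : I) ((f.1 i && qbit (o i)) (+) (f.2 i && pbit (o i))).

(* toy (anti)commutation: symplectic form; false = commute *)
Definition symp (I : finType) (f g : tobs I) : bool :=
  \big[addb/false]_(i : I) ((f.1 i && g.2 i) (+) (f.2 i && g.1 i)).

(* A valid epistemic state: the (nonempty) set of ontic states fixed by a
   toy stabilizer group, i.e. a commuting group V of toy operators with
   signs c, not containing -I (equivalently: the fixed set is nonempty). *)
Definition valid_state (I : finType) (E : {set ontic I}) : Prop :=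
  E != set0 /\
  exists (V : {set tobs I}) (c : tobs I -> bool),
    [/\ tzero I \in V,
        {in V &, forall f g, tadd f g \in V},
        {in V &, forall f g, symp f g = false} &
        E = [set o | [forall f in V, teval f o == c f]]].

Definition group_of (N k : nat) (g : 'I_N -> 'I_k) (j : 'I_k) : finType :=
  {i : 'I_N | g i == j}.

Definition restr (N k : nat) (g : 'I_N -> 'I_k) (j : 'I_k) (o : ontic 'I_N)
  : ontic (group_of g j) := [ffun x => o (val x)].

Definition product_state (N k : nat) (g : 'I_N -> 'I_k)
  (E : {set ontic 'I_N}) : Prop :=
  exists Es : forall j : 'I_k, {set ontic (group_of g j)},
    (forall j, valid_state (Es j)) /\
    E = [set o | [forall j, restr g j o \in Es j]].

Definition valid_trans (N : nat) (T : {perm ontic 'I_N}) : Prop :=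
  forall E : {set ontic 'I_N}, valid_state E -> valid_state (T @: E).

Definition non_entangling (N : nat) (T : {perm ontic 'I_N}) : Prop :=
  forall (k : nat) (g : 'I_N -> 'I_k) (E : {set ontic 'I_N}),
    product_state g E -> product_state g (T @: E).

Definition local_fun (N : nat) (i : 'I_N) (s : {perm 'I_4}) (o : ontic 'I_N)
  : ontic 'I_N := [ffun x => if x == i then s (o x) else o x].

Definition swap_fun (N : nat) (i j : 'I_N) (o : ontic 'I_N) : ontic 'I_N :=
  [ffun x => o (tperm i j x)].

Definition local_perms (N : nat) : {set {perm ontic 'I_N}} :=
  [set p : {perm ontic 'I_N} | [exists i : 'I_N, exists s : {perm 'I_4},
              [forall o, p o == local_fun i s o]]].

Definition swaps (N : nat) : {set {perm ontic 'I_N}} :=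
  [set p : {perm ontic 'I_N} | [exists i : 'I_N, exists j : 'I_N,
              [forall o, p o == swap_fun i j o]]].

From Pilot Require Import Defs.
From mathcomp Require Import all_boot all_order all_fingroup.
Set Implicit Arguments. Unset Strict Implicit. Unset Printing Implicit Defensive.

(* For that division the half-spaces {o | the q- (or p-, or q+p-)
   outcome of system i is b} are product states, product states are boxes
   (products of subsets of {1,2,3,4}), and a nonempty box whose complement is
   a nonempty box is a cylinder over a single coordinate.  So each outcome bit
   of system i of T^-1 o is a function of a single o_j; as the q+p outcome is
   the sum of the other two, the same j serves for both, whence
   (T^-1 o)_i = h_i (o_(s i)).  Injectivity of T forces s and all h_i to be
   bijective: T relabels the systems and then permutes each one locally, and
   relabellings are products of transpositions, i.e. of system swaps. *)

Section ToyOperators.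
Variable I : finType.
Implicit Types (f : tobs I) (o : ontic I).

Lemma tadd0f f : tadd (tzero I) f = f.
Proof. by case: f => a c; congr pair; apply/ffunP => i; rewrite !ffunE. Qed.

Lemma taddf0 f : tadd f (tzero I) = f.
Proof. by case: f => a c; congr pair; apply/ffunP => i; rewrite !ffunE addbF. Qed.

Lemma taddff f : tadd f f = tzero I.
Proof. by case: f => a c; congr pair; apply/ffunP => i; rewrite !ffunE addbb. Qed.

Lemma symp0f f : symp (tzero I) f = false.
Proof. by rewrite /symp big1 // => i _; rewrite !ffunE. Qed.

Lemma sympf0 f : symp f (tzero I) = false.
Proof. by rewrite /symp big1 // => i _; rewrite !ffunE !andbF. Qed.

Lemma sympff f : symp f f = false.
Proof. by rewrite /symp big1 // => i _; rewrite andbC addbb. Qed.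

Lemma teval0 o : teval (tzero I) o = false.
Proof. by rewrite /teval big1 // => i _; rewrite !ffunE. Qed.

(* The stabilizer group is {0, f}; f = 0 is allowed (then b = false). *)
Lemma valid_eigenset f b : (exists o, teval f o = b) ->
  valid_state [set o | teval f o == b].
Proof.
move=> [o0 fo0]; split; first by apply/set0Pn; exists o0; rewrite inE fo0.
exists [set tzero I; f], (fun g => if g == f then b else false); split.
- by rewrite !inE eqxx.
- by move=> g g'; rewrite !inE => /orP[]/eqP-> /orP[]/eqP->;
    rewrite ?tadd0f ?taddf0 ?taddff eqxx ?orbT.
- by move=> g g'; rewrite !inE => /orP[]/eqP-> /orP[]/eqP->;
    rewrite ?symp0f ?sympf0 ?sympff.
- apply/setP => o; rewrite !inE; apply/idP/forall_inP => [/eqP fo g | fo].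
    rewrite !inE => /orP[]/eqP->; last by rewrite eqxx fo.
    by case: (eqVneq (tzero I) f) => [f0|_]; rewrite teval0 // -fo -f0 teval0.
  by have := fo f; rewrite !inE eqxx orbT; apply.
Qed.

Definition teval1 (a c : bool) (x : 'I_4) : bool :=
  (a && qbit x) (+) (c && pbit x).

Definition tobs_at (u : I) (a c : bool) : tobs I :=
  ([ffun k => (k == u) && a], [ffun k => (k == u) && c]).

Lemma teval_at u a c o : teval (tobs_at u a c) o = teval1 a c (o u).
Proof.
rewrite /teval (bigD1 u) //= big1 ?addbF; first by rewrite !ffunE eqxx.
by move=> k /negbTE nku; rewrite !ffunE nku.
Qed.

End ToyOperators.

Definition decode (q p : bool) : 'I_4 :=
  if q then (if p then @Ordinal 4 3 isT else @Ordinal 4 2 isT)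
  else (if p then @Ordinal 4 1 isT else @Ordinal 4 0 isT).

Lemma decodeK (x : 'I_4) : decode (qbit x) (pbit x) = x.
Proof. by case: x => [[|[|[|[|m]]]] Hm] //=; apply: val_inj. Qed.

Lemma teval1_decode a c b : a || c -> teval1 a c (decode (a && b) (~~ a && b)) = b.
Proof. by case: a; case: c; case: b. Qed.

Lemma onto_injF (T : finType) (f : T -> T) : (forall y : T, y \in codom f) -> injective f.
Proof.
move=> onto x1 x2; apply: (image_injP _ _ _) => //.
apply/eqP/eq_card => y; rewrite in_setT.
by case/codomP: (onto y) => x ->; rewrite image_f ?in_setT.
Qed.

Section Coordinates.
Variables I X : finType.
Implicit Types (o : {ffun I -> X}) (x y : X).

Definition depends_only_on (Y : Type) (F : {ffun I -> X} -> Y) (j : I) :=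
  exists D : X -> Y, forall o, F o = D (o j).

Definition is_box (A : pred {ffun I -> X}) :=
  exists B : I -> pred X, forall o, A o = [forall j, B j (o j)].

Definition fupd o j x : {ffun I -> X} := [ffun k => if k == j then x else o k].

Lemma box_complement_depends (F : pred {ffun I -> X}) o1 o0 :
  is_box F -> is_box (predC F) -> F o1 -> ~~ F o0 ->
  exists j, depends_only_on F j.
Proof.
move=> [B1 HB1] [B0 HB0] Fo1 nFo0.
have outside_B0 o k : ~~ B0 k (o k) -> forall l, B1 l (o l).
  move=> nB0 l; apply/forallP: l; rewrite -HB1.
  by apply: contraR nB0 => nFo; move: (HB0 o); rewrite /= nFo => /esym/forallP.
have [j0 nB0j0] : exists j0, ~~ B0 j0 (o1 j0).
  by apply/existsP; rewrite -negb_forall -HB0 /= Fo1.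
have B0_full j z : j != j0 -> B0 j z.
  move=> nj0; apply: contraT => nB0jz.
  have B1a l : B1 l (fupd o0 j0 (o1 j0) l) by apply: (outside_B0 _ j0); rewrite ffunE eqxx.
  have B1b l : B1 l (fupd o0 j z l) by apply: (outside_B0 _ j); rewrite ffunE eqxx.
  suff : F o0 by rewrite (negbTE nFo0).
  rewrite HB1; apply/forallP => k; have [->|nkj0] := eqVneq k j0.
    by have := B1b j0; rewrite ffunE eq_sym (negbTE nj0).
  by have := B1a k; rewrite ffunE (negbTE nkj0).
exists j0, (fun x => ~~ B0 j0 x) => o.
have := HB0 o; rewrite /= => /(congr1 negb); rewrite negbK => ->; congr negb.
apply/forallP/idP => [/(_ j0) //|B0o k].
by have [->|] := eqVneq k j0; last exact: B0_full.
Qed.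

Lemma xor_coord_const (D1 D2 D3 : X -> bool) j1 j2 j3 x y :
  (forall o, D1 (o j1) (+) D2 (o j2) = D3 (o j3)) -> j2 != j1 -> j3 != j1 ->
  D1 x = D1 y.
Proof.
move=> HD n21 n31; have := HD (fupd [ffun=> x] j1 y); have := HD [ffun=> x].
by rewrite /fupd !ffunE eqxx (negbTE n21) (negbTE n31) => <- /addIb.
Qed.

Lemma depends_only_on_xor (F1 F2 F3 : {ffun I -> X} -> bool) j1 j2 j3 o o' u u' :
  depends_only_on F1 j1 -> depends_only_on F2 j2 -> depends_only_on F3 j3 ->
  (forall o, F1 o (+) F2 o = F3 o) -> F1 o != F1 o' -> F2 u != F2 u' -> j1 = j2.
Proof.
move=> [D1 H1] [D2 H2] [D3 H3] F123 F1o F2u.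
have HD o'' : D1 (o'' j1) (+) D2 (o'' j2) = D3 (o'' j3) by rewrite -H1 -H2 -H3.
apply/eqP; apply: contraT => n12.
have [e31|n31] := eqVneq j3 j1.
  have HD' o'' : D2 (o'' j2) (+) D1 (o'' j1) = D3 (o'' j3) by rewrite addbC.
  by move: F2u; rewrite !H2 (xor_coord_const (u j2) (u' j2) HD' n12) ?e31 ?eqxx.
by move: F1o; rewrite !H1 (xor_coord_const (o j1) (o' j1) HD _ n31) ?eqxx // eq_sym.
Qed.

Definition reindex (sg : I -> I) (h : I -> X -> X) o : {ffun I -> X} :=
  [ffun i => h i (o (sg i))].

(* A system j read by no sg i could be changed without changing the image. *)
Lemma reindex_inj_sites sg h x y : x != y -> injective (reindex sg h) -> injective sg.
Proof.
move=> nxy inj; apply: onto_injF => j; apply: contraT => nj.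
have : [ffun=> x] = fupd [ffun=> x] j y.
  apply: inj; apply/ffunP => i; rewrite !ffunE.
  by case: eqVneq => // sgi; rewrite -sgi codom_f in nj.
by move/(congr1 (fun o => o j)); rewrite !ffunE eqxx => /eqP; rewrite (negbTE nxy).
Qed.

Lemma reindex_inj_local sg h : injective sg -> injective (reindex sg h) ->
  forall i, injective (h i).
Proof.
move=> sg_inj inj i x y hxy.
have : [ffun=> x] = fupd [ffun=> x] (sg i) y.
  by apply: inj; apply/ffunP => k; rewrite !ffunE; case: eqVneq => [/sg_inj ->|].
by move/(congr1 (fun o => o (sg i))); rewrite !ffunE eqxx.
Qed.

End Coordinates.

Lemma depends_only_on_decode (I : finType) (F : ontic I -> 'I_4) j :
  depends_only_on (fun o => qbit (F o)) j -> depends_only_on (fun o => pbit (F o)) j ->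
  depends_only_on F j.
Proof.
move=> [Dq Hq] [Dp Hp]; exists (fun x => decode (Dq x) (Dp x)) => o.
by rewrite -Hq -Hp decodeK.
Qed.

Section FinestDivision.
Variable N : nat.

Definition finest (i : 'I_N) : 'I_N := i.

Definition finest_site (j : 'I_N) : Defs.group_of finest j :=
  exist (fun i => finest i == j) j (eqxx j).

Lemma finest_site_unique j (y : Defs.group_of finest j) : y = finest_site j.
Proof. by apply: val_inj; apply/eqP; exact: (valP y). Qed.

Lemma product_state_finest_box (E : {set ontic 'I_N}) :
  product_state finest E -> is_box [pred o : ontic 'I_N | o \in E].
Proof.
case=> Es [_ ->].
exists (fun j x => ([ffun=> x] : ontic (Defs.group_of finest j)) \in Es j) => o /=.
have restr_const j : restr finest j o = [ffun=> o j].
  by apply/ffunP => y; rewrite !ffunE (finest_site_unique y).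
by rewrite inE; apply: eq_forallb => j; rewrite restr_const.
Qed.

Lemma product_state_halfspace (i : 'I_N) a c b : a || c ->
  product_state finest [set o : ontic 'I_N | teval1 a c (o i) == b].
Proof.
move=> ac.
exists (fun j => [set o' | teval (tobs_at (finest_site j) ((j == i) && a) ((j == i) && c)) o'
                          == (j == i) && b]); split.
  move=> j; apply: valid_eigenset.
  exists [ffun=> decode (a && b) (~~ a && b)]; rewrite teval_at ffunE.
  by case: (j == i); rewrite ?teval1_decode.
apply/setP => o; rewrite !inE; apply/idP/forallP => [/eqP oi j | Ho].
  by rewrite inE teval_at ffunE /=; case: (eqVneq j i) => [->|]; rewrite ?oi.
by have := Ho i; rewrite inE teval_at ffunE eqxx.
Qed.

End FinestDivision.

Section NonEntangling.
Variables (N : nat) (T : {perm ontic 'I_N}).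
Hypothesis T_nonent : non_entangling T.
Local Open Scope group_scope.

Lemma non_entangling_bit i a c : a || c ->
  exists j, depends_only_on (fun o => teval1 a c (T^-1 o i)) j.
Proof.
move=> ac; pose F o := teval1 a c (T^-1 o i).
change (exists j, depends_only_on F j).
have box_half b : is_box [pred o | F o == b].
  have [B HB] := product_state_finest_box (T_nonent (product_state_halfspace i b ac)).
  by exists B => o; rewrite -HB /= -preim_permV !inE.
have F_wit b : F (T [ffun=> decode (a && b) (~~ a && b)]) = b.
  by rewrite /F permK ffunE teval1_decode.
have F_box : is_box F.
  by have [B HB] := box_half true; exists B => o; rewrite -HB /= eqb_id.
have nF_box : is_box (predC F).
  by have [B HB] := box_half false; exists B => o; rewrite -HB /= eqbF_neg.
apply: (box_complement_depends F_box nF_box (F_wit true)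
                                (o0 := T [ffun=> decode (a && false) (~~ a && false)])).
by rewrite F_wit.
Qed.

Lemma non_entangling_site i : exists j, depends_only_on (fun o => T^-1 o i) j.
Proof.
have [jq Dq] := non_entangling_bit i (a := true) (c := false) isT.
have [jp Dp] := non_entangling_bit i (a := false) (c := true) isT.
have [jy Dy] := non_entangling_bit i (a := true) (c := true) isT.
have Tconst x : T^-1 (T [ffun=> x]) i = x by rewrite permK ffunE.
have ejqp : jq = jp.
  apply: (depends_only_on_xor Dq Dp Dy (o := T [ffun=> ord0]) (o' := T [ffun=> ord_max])
                                       (u := T [ffun=> ord0]) (u' := T [ffun=> ord_max])).
  - by move=> o; rewrite /teval1 /=; case: qbit; case: pbit.
  - by rewrite !Tconst.
  - by rewrite !Tconst.
exists jq; apply: depends_only_on_decode.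
  by case: Dq => D HD; exists D => o; rewrite -HD /teval1 /= addbF.
by rewrite ejqp; case: Dp => D HD; exists D => o; rewrite -HD.
Qed.

Lemma non_entangling_reindex :
  exists sg h, forall o, T^-1 o = reindex sg h o.
Proof.
have [sg site_sg] := fin_all_exists non_entangling_site.
have [h Hh] := fin_all_exists site_sg.
by exists sg, h => o; apply/ffunP => i; rewrite ffunE Hh.
Qed.

Lemma non_entangling_form : exists (tau : {perm 'I_N}) (pi : 'I_N -> {perm 'I_4}),
  forall o, T o = [ffun j => pi j (o (tau j))].
Proof.
have [sg [h Tinv]] := non_entangling_reindex.
have U_inj : injective (reindex sg h).
  by apply: (can_inj (g := T)) => o; rewrite -Tinv permKV.
have sg_inj := reindex_inj_sites (x := ord0) (y := ord_max : 'I_4) isT U_inj.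
have h_inj := reindex_inj_local sg_inj U_inj.
pose sp := perm sg_inj; pose hp i := perm (h_inj i).
exists sp^-1, (fun j => (hp (sp^-1 j))^-1) => o.
apply: (canLR (permKV T)); rewrite Tinv; apply/ffunP => i; rewrite !ffunE.
have -> : sp^-1 (sg i) = i by rewrite -(permE sg_inj) permK.
by rewrite -(permE (h_inj i)) permKV.
Qed.

End NonEntangling.

Section Generators.
Variable N : nat.
Local Open Scope group_scope.
Notation gens := (local_perms N :|: swaps N).

Lemma local_fun_inj (i : 'I_N) s : injective (local_fun i s).
Proof.
apply: (can_inj (g := local_fun i s^-1)) => o; apply/ffunP => x; rewrite !ffunE.
by case: (x == i); rewrite ?permK.
Qed.

Definition local_perm i s : {perm ontic 'I_N} := perm (@local_fun_inj i s).

Definition site_fun (sigma : {perm 'I_N}) (o : ontic 'I_N) : ontic 'I_N :=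
  [ffun x => o (sigma x)].

Lemma site_fun_inj sigma : injective (site_fun sigma).
Proof.
apply: (can_inj (g := site_fun sigma^-1)) => o; apply/ffunP => x.
by rewrite !ffunE permKV.
Qed.

Definition site_perm sigma : {perm ontic 'I_N} := perm (@site_fun_inj sigma).

Lemma site_perm1 : site_perm 1 = 1.
Proof. by apply/permP => o; rewrite permE perm1; apply/ffunP => x; rewrite ffunE perm1. Qed.

Lemma site_permM s t : site_perm (s * t) = (site_perm t * site_perm s).
Proof. by apply/permP => o; rewrite permM !permE; apply/ffunP => x; rewrite !ffunE permM. Qed.

Lemma local_perm_gen i s : local_perm i s \in <<gens>>.
Proof.
rewrite mem_gen // !inE; apply/orP; left; apply/existsP; exists i; apply/existsP; exists s.
by apply/forallP => o; rewrite permE.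
Qed.

Lemma site_perm_gen sigma : site_perm sigma \in <<gens>>.
Proof.
have [ts -> _] := prod_tpermP sigma.
elim: ts => [|t ts IH]; first by rewrite big_nil site_perm1 group1.
rewrite big_cons site_permM groupM // mem_gen // !inE; apply/orP; right.
by apply/existsP; exists t.1; apply/existsP; exists t.2; apply/forallP => o; rewrite permE.
Qed.

Lemma prod_local_perm (r : seq 'I_N) pi : uniq r -> forall o,
  (\prod_(i <- r) local_perm i (pi i)) o = [ffun x => if x \in r then pi x (o x) else o x].
Proof.
elim: r => [_ o|a r IH /= /andP[nar /IH {}IH] o].
  by rewrite big_nil perm1; apply/ffunP => x; rewrite ffunE.
rewrite big_cons permM IH permE; apply/ffunP => x; rewrite !ffunE in_cons.
by case: eqVneq => [->|]; rewrite ?(negbTE nar).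
Qed.

Lemma relabel_local_gen (T : {perm ontic 'I_N}) (tau : {perm 'I_N})
    (pi : 'I_N -> {perm 'I_4}) :
  (forall o, T o = [ffun j => pi j (o (tau j))]) -> T \in <<gens>>.
Proof.
move=> Tform.
have -> : T = (site_perm tau * \prod_(i <- enum 'I_N) local_perm i (pi i)).
  apply/permP => o; rewrite permM prod_local_perm ?enum_uniq // Tform permE.
  by apply/ffunP => x; rewrite !ffunE mem_enum.
by rewrite groupM ?site_perm_gen // group_prod // => i _; exact: local_perm_gen.
Qed.

End Generators.

Theorem mainTheorem10 (N : nat) (T : {perm ontic 'I_N}) :
  valid_trans T -> non_entangling T ->
  exists s : seq {perm ontic 'I_N},
    all (fun p => p \in local_perms N :|: swaps N) s /\
    T = (\prod_(p <- s) p)%g.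
Proof.
move=> _ T_nonent.
have [tau [pi Tform]] := non_entangling_form T_nonent.
have /gen_prodgP [n [c c_gens ->]] := relabel_local_gen Tform.
exists [seq c i | i <- enum 'I_n]; split.
  by apply/allP => _ /mapP [i _ ->]; exact: c_gens.
by rewrite big_map enumT.
Qed.
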